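(* Let $L>0$ be fixed. There exists $C>0$ such that for all $\delta t\in(0,1)$ and all integers $p\ge1$, $n\ge1$, $$\delta t^2\sum_{\substack{(k_1,k_2)\in\{0,\dots,n-1\}^2\\ 2n-2-k_1-k_2\ge1}}\frac{e^{-p^2\frac{\pi^2}{L^2}(k_1+k_2)\delta t}}{\sqrt{(2n-2-k_1-k_2)\delta t}}\le C.$$ *)

From Stdlib Require Import Reals Lra Lia.
Open Scope R_scope.

Definition lemma6p4_term (L dt : R) (p n k1 k2 : nat) : R :=
  if Nat.leb 1 (2 * n - 2 - k1 - k2)%nat then
    exp (- (INR p)^2 * (PI^2 / L^2) * (INR (k1 + k2)) * dt)
    / sqrt (INR (2 * n - 2 - k1 - k2) * dt)
  else 0.

Definition lemma6p4_sum (L dt : R) (p n : nat) : R :=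
  sum_f_R0 (fun k1 => sum_f_R0 (fun k2 => lemma6p4_term L dt p n k1 k2) (n - 1))
    (n - 1).

(* Write a = PI^2 / L^2 and q = exp (- a dt), and let n = m + 1.  Since p >= 1
   the numerator is at most q^k1 q^k2, and with j = m - k1 the denominator
   satisfies (j + 1) <= 2 (2n-2-k1-k2), so the double sum factorises into the
   geometric sum of q^k2, at most 1/(1-q), times the convolution
   sum_k q^k / sqrt (m-k+1), which is at most sqrt (2/(1-q)).  Hence
   dt^2 * sum <= 2 x sqrt x with x = dt / (1-q) <= (1+a)/a for dt < 1. *)

From Stdlib Require Import Reals Lra Lia.
Open Scope R_scope.

Lemma exp_INR_mul (k : nat) (x : R) : exp (INR k * x) = exp x ^ k.
Proof.
  induction k as [|k IH].
  - simpl. rewrite Rmult_0_l, exp_0. reflexivity.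
  - rewrite S_INR, Rmult_plus_distr_r, Rmult_1_l, exp_plus, IH. simpl. ring.
Qed.

Lemma exp_le_compat (x y : R) : x <= y -> exp x <= exp y.
Proof.
  intros [Hlt | ->]; [left; exact (exp_increasing _ _ Hlt) | right; reflexivity].
Qed.

Lemma PI_sqr_div_sqr_pos (L : R) : 0 < L -> 0 < PI ^ 2 / L ^ 2.
Proof. intros HL. apply Rdiv_lt_0_compat; apply pow_lt; [exact PI_RGT_0 | exact HL]. Qed.

Lemma exp_opp_mul_lt_1 (a dt : R) : 0 < a -> 0 < dt -> exp (- a * dt) < 1.
Proof. intros Ha Hdt. rewrite <- exp_0. apply exp_increasing. nra. Qed.

Lemma sqrt_INR_S_pos (j : nat) : 0 < sqrt (INR j + 1).
Proof. apply sqrt_lt_R0. pose proof (pos_INR j). lra. Qed.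

Lemma geom_sum_le (q : R) (m : nat) :
  0 <= q < 1 -> sum_f_R0 (fun k => q ^ k) m <= / (1 - q).
Proof.
  intros Hq. rewrite tech3 by lra. unfold Rdiv.
  rewrite <- (Rmult_1_l (/ (1 - q))) at 2.
  apply Rmult_le_compat_r; [left; apply Rinv_0_lt_compat; lra |].
  pose proof (pow_le q (S m) (proj1 Hq)). lra.
Qed.

Lemma one_sub_exp_opp_ge (y : R) : 0 <= y -> y / (1 + y) <= 1 - exp (- y).
Proof.
  intros Hy.
  assert (Hey : 1 + y <= exp y) by apply exp_ineq1_le.
  rewrite exp_Ropp.
  assert (Hinv : / exp y <= / (1 + y)) by (apply Rinv_le_contravar; lra).
  replace (y / (1 + y)) with (1 - / (1 + y)) by (field; lra).
  lra.
Qed.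

Lemma div_one_sub_exp_le (a dt : R) :
  0 < a -> 0 < dt <= 1 -> dt / (1 - exp (- a * dt)) <= (1 + a) / a.
Proof.
  intros Ha Hdt.
  assert (Hy : 0 < a * dt) by nra.
  pose proof (one_sub_exp_opp_ge (a * dt) (Rlt_le _ _ Hy)) as Hge.
  rewrite Ropp_mult_distr_l in Hge.
  assert (Hpos : 0 < a * dt / (1 + a * dt)) by (apply Rdiv_lt_0_compat; lra).
  apply Rle_trans with (dt / (a * dt / (1 + a * dt))).
  - unfold Rdiv at 1 2. apply Rmult_le_compat_l; [lra |].
    apply Rinv_le_contravar; assumption.
  - replace (dt / (a * dt / (1 + a * dt))) with ((1 + a * dt) / a) by (field; lra).
    unfold Rdiv. apply Rmult_le_compat_r; [left; apply Rinv_0_lt_compat |]; nra.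
Qed.

Lemma inv_sqrt_le_2_sqrt_diff (m : nat) :
  / sqrt (INR (S m) + 1) + 2 * sqrt (INR m + 1) <= 2 * sqrt (INR (S m) + 1).
Proof.
  pose proof (sqrt_INR_S_pos m) as Hu0. pose proof (sqrt_INR_S_pos (S m)) as Hv0.
  set (u := sqrt (INR m + 1)) in *. set (v := sqrt (INR (S m) + 1)) in *.
  assert (Hu : u * u = INR m + 1) by (apply sqrt_sqrt; pose proof (pos_INR m); lra).
  assert (Hv : v * v = INR m + 2)
    by (unfold v; rewrite sqrt_sqrt; rewrite S_INR; pose proof (pos_INR m); lra).
  assert (Hsq : 0 <= (v - u) * (v - u)) by apply Rle_0_sqr.
  assert (Hinv : / v <= 2 * v - 2 * u).
  { apply Rmult_le_reg_r with v; [lra |]. rewrite Rinv_l by lra. nra. }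
  lra.
Qed.

Section GeomInvSqrtConv.

Variable q : R.

Definition geom_invsqrt_conv (m : nat) : R :=
  sum_f_R0 (fun k => q ^ k / sqrt (INR (m - k) + 1)) m.

Lemma geom_invsqrt_conv_S (m : nat) :
  geom_invsqrt_conv (S m) = / sqrt (INR (S m) + 1) + q * geom_invsqrt_conv m.
Proof.
  unfold geom_invsqrt_conv. rewrite decomp_sum by lia. simpl Init.Nat.pred.
  rewrite scal_sum, Nat.sub_0_r. f_equal.
  - unfold Rdiv. simpl. ring.
  - apply sum_eq. intros i _. simpl (S m - S i)%nat. simpl pow. unfold Rdiv. ring.
Qed.

Hypothesis q_ge0 : 0 <= q.

Lemma geom_invsqrt_conv_ge0 (m : nat) : 0 <= geom_invsqrt_conv m.
Proof.
  apply cond_pos_sum. intros k. unfold Rdiv. apply Rmult_le_pos.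
  - apply pow_le, q_ge0.
  - left. apply Rinv_0_lt_compat, sqrt_INR_S_pos.
Qed.

Hypothesis q_le1 : q <= 1.

Lemma geom_invsqrt_conv_le_2sqrt (m : nat) :
  geom_invsqrt_conv m <= 2 * sqrt (INR m + 1).
Proof.
  induction m as [|m IH].
  - unfold geom_invsqrt_conv. simpl. rewrite Rplus_0_l, sqrt_1. lra.
  - rewrite geom_invsqrt_conv_S.
    pose proof (geom_invsqrt_conv_ge0 m).
    pose proof (inv_sqrt_le_2_sqrt_diff m).
    assert (q * geom_invsqrt_conv m <= geom_invsqrt_conv m) by nra.
    lra.
Qed.

End GeomInvSqrtConv.

Lemma geom_invsqrt_conv_le (q : R) (m : nat) :
  0 <= q < 1 -> geom_invsqrt_conv q m <= sqrt (2 / (1 - q)).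
Proof.
  intros [Hq0 Hq1]. set (B := sqrt (2 / (1 - q))).
  assert (HBB : B * B * (1 - q) = 2)
    by (unfold B; rewrite sqrt_sqrt; [field | apply Rlt_le, Rdiv_lt_0_compat]; lra).
  assert (HB1 : 1 <= B).
  { rewrite <- sqrt_1. apply sqrt_le_1_alt.
    apply Rmult_le_reg_r with (1 - q); [lra |]. unfold Rdiv.
    rewrite Rmult_assoc, Rinv_l; lra. }
  induction m as [|m IH].
  - unfold geom_invsqrt_conv. simpl. rewrite Rplus_0_l, sqrt_1. lra.
  - pose proof (geom_invsqrt_conv_le_2sqrt q Hq0 (Rlt_le _ _ Hq1) (S m)) as Hsqrt.
    rewrite geom_invsqrt_conv_S in *.
    pose proof (sqrt_INR_S_pos (S m)) as Hv0.
    set (v := sqrt (INR (S m) + 1)) in *.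
    destruct (Rle_lt_dec (/ v) ((1 - q) * B)) as [Hsmall | Hlarge].
    + assert (q * geom_invsqrt_conv q m <= q * B) by (apply Rmult_le_compat_l; lra).
      lra.
    + (* then 2 v (1 - q) B < 2 = B (1 - q) B, so the cruder bound 2 v already gives B *)
      assert (Hv : v * ((1 - q) * B) < 1).
      { apply (Rmult_lt_compat_l v) in Hlarge; [| lra].
        rewrite Rinv_r in Hlarge by lra. exact Hlarge. }
      assert (2 * v < B).
      { apply Rmult_lt_reg_r with ((1 - q) * B); nra. }
      lra.
Qed.

Lemma exp_decay_le (a dt : R) (p k1 k2 : nat) :
  0 <= a -> 0 <= dt -> (1 <= p)%nat ->
  exp (- INR p ^ 2 * a * INR (k1 + k2) * dt) <= exp (- a * dt) ^ k1 * exp (- a * dt) ^ k2.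
Proof.
  intros Ha Hdt Hp.
  rewrite <- !exp_INR_mul, <- exp_plus. apply exp_le_compat.
  assert (Hp1 : 1 <= INR p) by (apply (le_INR 1); exact Hp).
  pose proof (pos_INR k1). pose proof (pos_INR k2).
  assert (0 <= (INR p ^ 2 - 1) * a * (INR k1 + INR k2) * dt).
  { repeat apply Rmult_le_pos; simpl; nra. }
  rewrite plus_INR. nra.
Qed.

Lemma inv_sqrt_add_le (j l : nat) :
  (1 <= j + l)%nat -> / sqrt (INR (j + l)) <= sqrt 2 / sqrt (INR j + 1).
Proof.
  intros Hjl.
  assert (Hjl' : 1 <= INR (j + l)) by (apply (le_INR 1); exact Hjl).
  assert (Hj : INR j + 1 <= 2 * INR (j + l)).
  { destruct j as [|j]; [simpl in *; lra |].
    rewrite plus_INR. pose proof (pos_INR l).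
    assert (1 <= INR (S j)) by (apply (le_INR 1); lia). lra. }
  pose proof (sqrt_INR_S_pos j).
  assert (HsM : 0 < sqrt (INR (j + l))) by (apply sqrt_lt_R0; lra).
  assert (Hle : sqrt (INR j + 1) <= sqrt 2 * sqrt (INR (j + l))).
  { rewrite <- sqrt_mult by lra. apply sqrt_le_1_alt. exact Hj. }
  apply Rmult_le_reg_r with (sqrt (INR (j + l)) * sqrt (INR j + 1)); [nra |].
  replace (/ sqrt (INR (j + l)) * (sqrt (INR (j + l)) * sqrt (INR j + 1)))
    with (sqrt (INR j + 1)) by (field; lra).
  replace (sqrt 2 / sqrt (INR j + 1) * (sqrt (INR (j + l)) * sqrt (INR j + 1)))
    with (sqrt 2 * sqrt (INR (j + l))) by (field; lra).
  exact Hle.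
Qed.

Lemma lemma6p4_term_le (L dt : R) (p m k1 k2 : nat) :
  0 < L -> 0 < dt -> (1 <= p)%nat -> (k1 <= m)%nat -> (k2 <= m)%nat ->
  let q := exp (- (PI ^ 2 / L ^ 2) * dt) in
  dt ^ 2 * lemma6p4_term L dt p (S m) k1 k2
  <= sqrt 2 * (dt * sqrt dt) * (q ^ k1 / sqrt (INR (m - k1) + 1)) * q ^ k2.
Proof.
  intros HL Hdt Hp Hk1 Hk2 q.
  pose proof (PI_sqr_div_sqr_pos L HL) as Ha.
  pose proof (exp_pos (- (PI ^ 2 / L ^ 2) * dt)) as Hq. fold q in Hq.
  assert (Hsdt : 0 < sqrt dt) by (apply sqrt_lt_R0; lra).
  pose proof (sqrt_INR_S_pos (m - k1)).
  pose proof (sqrt_lt_R0 2 ltac:(lra)).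
  pose proof (pow_lt q k1 Hq). pose proof (pow_lt q k2 Hq).
  unfold lemma6p4_term.
  destruct (Nat.leb 1 (2 * S m - 2 - k1 - k2)) eqn:E.
  2: { rewrite Rmult_0_r. apply Rlt_le. repeat apply Rmult_lt_0_compat; auto using Rinv_0_lt_compat. }
  apply Nat.leb_le in E.
  replace (2 * S m - 2 - k1 - k2)%nat with ((m - k1) + (m - k2))%nat in * by lia.
  set (M := ((m - k1) + (m - k2))%nat) in *.
  assert (HM : 0 < sqrt (INR M)) by (apply sqrt_lt_R0, (lt_INR 0); lia).
  pose proof (inv_sqrt_add_le (m - k1) (m - k2) E) as Hden. fold M in Hden.
  pose proof (exp_decay_le (PI ^ 2 / L ^ 2) dt p k1 k2 (Rlt_le _ _ Ha) (Rlt_le _ _ Hdt) Hp) as Hnum.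
  fold q in Hnum.
  rewrite sqrt_mult by (apply pos_INR || lra).
  set (E0 := exp (- INR p ^ 2 * (PI ^ 2 / L ^ 2) * INR (k1 + k2) * dt)) in *.
  pose proof (exp_pos (- INR p ^ 2 * (PI ^ 2 / L ^ 2) * INR (k1 + k2) * dt)) as HE0.
  fold E0 in HE0.
  set (sd := sqrt dt) in *.
  assert (Hsd2 : dt = sd * sd) by (unfold sd; rewrite sqrt_sqrt; lra).
  rewrite Hsd2.
  replace ((sd * sd) ^ 2 * (E0 / (sqrt (INR M) * sd)))
    with (sd * sd * sd * E0 * / sqrt (INR M)) by (field; lra).
  replace (sqrt 2 * (sd * sd * sd) * (q ^ k1 / sqrt (INR (m - k1) + 1)) * q ^ k2)
    with (sd * sd * sd * (q ^ k1 * q ^ k2) * (sqrt 2 / sqrt (INR (m - k1) + 1)))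
    by (field; lra).
  assert (Hsd3 : 0 <= sd * sd * sd) by (repeat apply Rmult_le_pos; lra).
  apply Rmult_le_compat; [| left; apply Rinv_0_lt_compat; exact HM | | exact Hden].
  - apply Rmult_le_pos; lra.
  - apply Rmult_le_compat_l; [exact Hsd3 | exact Hnum].
Qed.

Lemma sum_mul_sum (f g : nat -> R) (n m : nat) :
  sum_f_R0 f n * sum_f_R0 g m = sum_f_R0 (fun i => sum_f_R0 (fun j => f i * g j) m) n.
Proof.
  rewrite (Rmult_comm _ (sum_f_R0 g m)), scal_sum.
  apply sum_eq. intros i _. rewrite scal_sum.
  apply sum_eq. intros j _. ring.
Qed.

Lemma lemma6p4_sum_le (L dt : R) (p m : nat) :
  0 < L -> 0 < dt -> (1 <= p)%nat ->
  let q := exp (- (PI ^ 2 / L ^ 2) * dt) in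
  dt ^ 2 * lemma6p4_sum L dt p (S m)
  <= sqrt 2 * (dt * sqrt dt) * geom_invsqrt_conv q m * sum_f_R0 (fun k => q ^ k) m.
Proof.
  intros HL Hdt Hp q. unfold lemma6p4_sum, geom_invsqrt_conv.
  replace (S m - 1)%nat with m by lia.
  rewrite Rmult_assoc, sum_mul_sum, !scal_sum.
  apply sum_Rle. intros k1 Hk1.
  rewrite (Rmult_comm _ (dt ^ 2)), (Rmult_comm _ (sqrt 2 * _)), !scal_sum.
  apply sum_Rle. intros k2 Hk2.
  rewrite Rmult_comm.
  eapply Rle_trans; [apply lemma6p4_term_le; assumption |].
  right. fold q. ring.
Qed.

Lemma lemma6p4_sum_le_geom (L dt : R) (p m : nat) :
  0 < L -> 0 < dt -> (1 <= p)%nat ->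
  let x := dt / (1 - exp (- (PI ^ 2 / L ^ 2) * dt)) in
  dt ^ 2 * lemma6p4_sum L dt p (S m) <= 2 * x * sqrt x.
Proof.
  intros HL Hdt Hp x.
  pose proof (PI_sqr_div_sqr_pos L HL) as Ha.
  set (q := exp (- (PI ^ 2 / L ^ 2) * dt)) in x.
  assert (Hq0 : 0 < q) by apply exp_pos.
  assert (Hq1 : q < 1) by (apply exp_opp_mul_lt_1; assumption).
  pose proof (geom_invsqrt_conv_ge0 q (Rlt_le _ _ Hq0) m).
  pose proof (geom_invsqrt_conv_le q m (conj (Rlt_le _ _ Hq0) Hq1)) as Hconv.
  pose proof (geom_sum_le q m (conj (Rlt_le _ _ Hq0) Hq1)) as Hgeom.
  assert (HK : 0 <= sqrt 2 * (dt * sqrt dt))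
    by (pose proof (sqrt_pos 2); pose proof (sqrt_pos dt); apply Rmult_le_pos; nra).
  assert (Hr : 0 < / (1 - q)) by (apply Rinv_0_lt_compat; lra).
  eapply Rle_trans; [apply lemma6p4_sum_le; assumption |]. fold q.
  eapply Rle_trans.
  { apply Rmult_le_compat; [| apply cond_pos_sum; intros; apply pow_le; lra | | exact Hgeom].
    - apply Rmult_le_pos; assumption.
    - apply Rmult_le_compat_l; [exact HK | exact Hconv]. }
  right. unfold x, Rdiv.
  rewrite !sqrt_mult by (lra || apply Rlt_le, Hr).
  replace (sqrt 2 * (dt * sqrt dt) * (sqrt 2 * sqrt (/ (1 - q))) * / (1 - q))
    with ((sqrt 2 * sqrt 2) * (dt * / (1 - q)) * (sqrt dt * sqrt (/ (1 - q)))) by ring.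
  rewrite sqrt_sqrt by lra. ring.
Qed.

Theorem lemma6p4 (L : R) (hL : 0 < L) :
  exists C : R, 0 < C /\
    forall (dt : R) (p n : nat), 0 < dt < 1 -> (1 <= p)%nat -> (1 <= n)%nat ->
      dt ^ 2 * lemma6p4_sum L dt p n <= C.
Proof.
  set (a := PI ^ 2 / L ^ 2).
  pose proof (PI_sqr_div_sqr_pos L hL) as Ha. fold a in Ha.
  set (c := (1 + a) / a).
  assert (Hc : 0 < c) by (apply Rdiv_lt_0_compat; lra).
  exists (2 * c * sqrt c). split.
  { pose proof (sqrt_lt_R0 c Hc). nra. }
  intros dt p n Hdt Hp Hn.
  destruct n as [|m]; [lia |].
  eapply Rle_trans; [apply lemma6p4_sum_le_geom; lra || assumption |]. fold a.
  set (x := dt / (1 - exp (- a * dt))).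
  assert (Hxc : x <= c) by (apply div_one_sub_exp_le; lra).
  assert (Hx : 0 <= x).
  { apply Rlt_le, Rdiv_lt_0_compat; [lra |].
    pose proof (exp_opp_mul_lt_1 a dt Ha (proj1 Hdt)). lra. }
  pose proof (sqrt_le_1_alt _ _ Hxc). pose proof (sqrt_pos x).
  apply Rmult_le_compat; nra.
Qed.
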